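(* Let $\mathcal X=\{X_1,\dots,X_n\}$, $n\in\mathbb N$, be a multi-set of real symmetric $2\times2$ matrices with $-\frac1{\sqrt2}I\le_{\mathrm L}X_i\le_{\mathrm L}\frac1{\sqrt2}I$ for all $i$. Then $-\frac1{\sqrt2}I\le_{\mathrm L}\mathrm{Sup}_{\mathrm{RLE}}(\mathcal X)\le_{\mathrm L}\frac1{\sqrt2}I$.
   Context: $A\le_{\mathrm L}B$ means $B-A$ is positive semidefinite; $I$ is the $2\times 2$ identity. $\mathrm{Sup}_{\mathrm{LE}}(\mathcal X):=\lim_{m\to\infty}\frac1m\log\sum_{i}\exp(mX_i)$. Write $X_i=\lambda_iu_iu_i^{\mathsf T}+\mu_iv_iv_i^{\mathsf T}$ (spectral form, $\lambda_i\ge\mu_i$, orthonormal $u_i,v_i$). The multi-set of bases $\{\{u_i,v_i\}\}_{i}$ is generic if for no $i\neq j$ the vector $u_i$ is aligned (equal up to sign) with $u_j$. Families $\mathcal X^{(\delta)}=\{X_1^{(\delta)},\dots,X_n^{(\delta)}\}$ converge planar to $\mathcal X$ if $X_i^{(\delta)}\to X_i$ as $\delta\to0$ and $X_i^{(\delta)}$ has the same eigenvalues as $X_i$ for all $i$ and $\delta$. The relaxed log-exp-supremum is $\mathrm{Sup}_{\mathrm{RLE}}(\mathcal X):=\mathrm{Sup}_{\mathrm{LE}}(\mathcal X)$ if the bases of $\mathcal X$ are generic, and otherwise $\mathrm{Sup}_{\mathrm{RLE}}(\mathcal X):=\lim_{\delta\to0}\mathrm{Sup}_{\mathrm{LE}}(\mathcal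 X^{(\delta)})$, where $\mathcal X^{(\delta)}$ converges planar to $\mathcal X$ and each $\mathcal X^{(\delta)}$ has generic bases (the limit being the same for all such families). *)

From HB Require Import structures.
From mathcomp Require Import all_boot all_order all_algebra.
From mathcomp Require Import all_classical all_reals all_analysis.
Set Implicit Arguments. Unset Strict Implicit. Unset Printing Implicit Defensive.
Import Order.TTheory GRing.Theory Num.Theory.
Import numFieldNormedType.Exports.
Local Open Scope classical_set_scope.
Local Open Scope ring_scope.

Section Defs.
Variable R : realType.

Definition symmetric2 (A : 'M[R]_2) : Prop := A^T = A.

Definition psd2 (A : 'M[R]_2) : Prop :=
  forall v : 'cV[R]_2, 0 <= ((v^T *m A *m v) 0 0).

Definition loewner_le (A B : 'M[R]_2) : Prop := psd2 (B - A).

Definition mexp (A : 'M[R]_2) : 'M[R]_2 :=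
  lim (series (fun k : nat => (k`!%:R)^-1 *: A ^+ k) @ \oo).

(* matrix logarithm: the real symmetric B with exp B = A
   (exists uniquely for A symmetric positive definite) *)
Definition mlog (A : 'M[R]_2) : 'M[R]_2 :=
  xget 0 [set B | symmetric2 B /\ mexp B = A].

Definition SupLE (n : nat) (X : 'I_n -> 'M[R]_2) : 'M[R]_2 :=
  lim ((fun m : nat => (m%:R)^-1 *: mlog (\sum_(i < n) mexp (m%:R *: X i)))
         @ \oo).

Definition spectral_form (X : 'M[R]_2) (lam mu : R) (u v : 'cV[R]_2) : Prop :=
  [/\ mu <= lam, (u^T *m u) 0 0 = 1, (v^T *m v) 0 0 = 1, (u^T *m v) 0 0 = 0
    & X = lam *: (u *m u^T) + mu *: (v *m v^T)].

Definition aligned (u w : 'cV[R]_2) : Prop := u = w \/ u = - w.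

Definition generic_bases (n : nat) (X : 'I_n -> 'M[R]_2) : Prop :=
  exists u : 'I_n -> 'cV[R]_2,
    (forall i, exists (lam mu : R) (v : 'cV[R]_2), spectral_form (X i) lam mu (u i) v)
    /\ (forall i j : 'I_n, i != j -> ~ aligned (u i) (u j)).

Definition converges_planar (n : nat) (Xd : R -> 'I_n -> 'M[R]_2)
    (X : 'I_n -> 'M[R]_2) : Prop :=
  (forall i, (fun d => Xd d i) @ 0^'+ --> X i) /\
  (forall d, 0 < d -> forall i (a : R), eigenvalue (Xd d i) a = eigenvalue (X i) a).

Definition admissible_families (n : nat) (X : 'I_n -> 'M[R]_2) :
    set (R -> 'I_n -> 'M[R]_2) :=
  [set Xd | converges_planar Xd X /\
            (forall d, 0 < d -> (forall i, symmetric2 (Xd d i)) /\ generic_bases (Xd d))].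

Definition SupRLE (n : nat) (X : 'I_n -> 'M[R]_2) : 'M[R]_2 :=
  if `[< generic_bases X >] then SupLE X
  else lim ((fun d => SupLE (xget (fun _ => X) (admissible_families X) d)) @ 0^'+).

End Defs.

(* On symmetric 2x2 matrices, exp and log
   act on the two eigenvalues, so they transport such bounds through expR and
   its inverse; hence -m c I <= log (sum_i exp (m X_i)) <= (m c + log n) I,
   and after dividing by m the bounds tend to [-c, c].  Being a closed
   condition, the sandwich passes to the limit m -> oo.  Planar perturbations
   keep the eigenvalues, hence the bounds, and the limit delta -> 0 is handled
   in the same way.  The junk values of [lim] and [mlog] are 0, which satisfies
   every such sandwich. *)

From HB Require Import structures.
From mathcomp Require Import all_boot all_order all_algebra.
From mathcomp Require Import all_classical all_reals all_analysis.
From mathcomp Require Import ring lra.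
Set Implicit Arguments. Unset Strict Implicit. Unset Printing Implicit Defensive.
Import Order.TTheory GRing.Theory Num.Theory.
Import numFieldNormedType.Exports.
Local Open Scope ring_scope.

Section QuadraticForm.
Variables (R : realFieldType) (k : nat).
Implicit Types (A Y Z P : 'M[R]_k) (w : 'cV[R]_k).

Definition qform Y w : R := (w^T *m Y *m w) 0 0.
Definition sqnorm w : R := (w^T *m w) 0 0.

Lemma qformD Y Z w : qform (Y + Z) w = qform Y w + qform Z w.
Proof. by rewrite /qform mulmxDr mulmxDl mxE. Qed.

Lemma qformN Y w : qform (- Y) w = - qform Y w.
Proof. by rewrite /qform mulmxN mulNmx mxE. Qed.

Lemma qformZ a Y w : qform (a *: Y) w = a * qform Y w.
Proof. by rewrite /qform -scalemxAr -scalemxAl mxE. Qed.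

Lemma qform0 w : qform 0 w = 0.
Proof. by rewrite /qform mulmx0 mul0mx mxE. Qed.

Lemma qform_sum (I : finType) (F : I -> 'M[R]_k) w :
  qform (\sum_i F i) w = \sum_i qform (F i) w.
Proof. by elim/big_rec2: _ => [|i x y _ <-]; rewrite ?qform0 ?qformD. Qed.

Lemma qform1 w : qform 1%:M w = sqnorm w.
Proof. by rewrite /qform mulmx1. Qed.

Lemma sqnormE w : sqnorm w = \sum_i w i 0 ^+ 2.
Proof. by rewrite /sqnorm mxE; apply: eq_bigr => i _; rewrite mxE expr2. Qed.

Lemma sqnorm_ge0 w : 0 <= sqnorm w.
Proof. by rewrite sqnormE sumr_ge0 // => i _; apply: sqr_ge0. Qed.

Lemma sqnorm_gt0 w : w != 0 -> 0 < sqnorm w.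
Proof.
move=> w0; rewrite lt_neqAle sqnorm_ge0 andbT eq_sym; apply: contra w0.
rewrite sqnormE => /eqP /(psumr_eq0P (fun i _ => sqr_ge0 (w i 0))) hw.
by apply/eqP/matrixP => i j; rewrite (ord1 j) mxE; apply/eqP; rewrite -sqrf_eq0 hw.
Qed.

Lemma qform_proj_ge0 P w : P^T = P -> P *m P = P -> 0 <= qform P w.
Proof.
move=> Pt PP; have -> : qform P w = sqnorm (P *m w).
  by rewrite /sqnorm /qform trmx_mul Pt mulmxA -(mulmxA _ P P) PP.
exact: sqnorm_ge0.
Qed.

(* [lo I <=_L Y <=_L hi I], stated through the numerical range of [Y]. *)
Definition loewner_within lo hi Y :=
  forall w, lo * sqnorm w <= qform Y w <= hi * sqnorm w.

Lemma loewner_within0 lo hi : lo <= 0 -> 0 <= hi -> loewner_within lo hi 0.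
Proof.
move=> lo0 hi0 w; rewrite qform0.
by rewrite mulr_le0_ge0 ?mulr_ge0 ?sqnorm_ge0.
Qed.

Lemma loewner_withinZ a lo hi Y : 0 <= a ->
  loewner_within lo hi Y -> loewner_within (a * lo) (a * hi) (a *: Y).
Proof.
move=> a0 hY w; have /andP[h1 h2] := hY w.
by rewrite qformZ -!mulrA !ler_wpM2l.
Qed.

Lemma loewner_within_sum (I : finType) (lo hi : I -> R) (F : I -> 'M[R]_k) :
  (forall i, loewner_within (lo i) (hi i) (F i)) ->
  loewner_within (\sum_i lo i) (\sum_i hi i) (\sum_i F i).
Proof.
move=> hF w; rewrite qform_sum !mulr_suml.
by apply/andP; split; apply: ler_sum => i _; case/andP: (hF i w).
Qed.

Lemma loewner_within_addgt0 lo hi Y :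
  (forall e, 0 < e -> loewner_within lo (hi + e) Y) -> loewner_within lo hi Y.
Proof.
move=> hY w; apply/andP; split; first by case/andP: (hY 1 ltr01 w).
have [->|w0] := eqVneq w 0.
  by rewrite /qform /sqnorm trmx0 !(mul0mx, mulmx0) mxE mulr0.
have N0 := sqnorm_gt0 w0.
apply/ler_addgt0Pr => e e0; have /andP[_] := hY (e / sqnorm w) (divr_gt0 e0 N0) w.
by rewrite mulrDl divfK // gt_eqF.
Qed.

Lemma loewner_within_eigenvalue lo hi Y a :
  loewner_within lo hi Y -> eigenvalue Y a -> lo <= a <= hi.
Proof.
move=> hY /eigenvalueP[v vY v0]; have u0 : v^T != 0 by rewrite trmx_eq0.
have qa : qform Y v^T = a * sqnorm v^T.
  by rewrite /qform /sqnorm trmxK vY -scalemxAl mxE.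
by have /andP[] := hY v^T; rewrite qa !ler_pM2r ?sqnorm_gt0 // => -> ->.
Qed.

Lemma proj_fixed_row P : P *m P = P -> P != 0 ->
  exists2 v : 'rV[R]_k, v != 0 & v *m P = v.
Proof.
move=> PP /eqP P0.
have /existsNP[i /existsNP[j /eqP Pij]] : ~ forall i j, P i j = 0.
  by move=> h; apply: P0; apply/matrixP => i j; rewrite h mxE.
exists (delta_mx 0 i *m P); last by rewrite -mulmxA PP.
by apply: contraNneq Pij => /matrixP/(_ 0 j); rewrite -rowE !mxE => ->.
Qed.

Lemma proj_complK P : P *m P = P -> (1%:M - P) *m (1%:M - P) = 1%:M - P.
Proof. by move=> PP; rewrite mulmxBl mul1mx mulmxBr mulmx1 PP subrr subr0. Qed.

Lemma proj_compl_sym P : P^T = P -> (1%:M - P)^T = 1%:M - P.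
Proof. by move=> Pt; rewrite linearB /= trmx1 Pt. Qed.

(* Spectral decomposition: eigenvalue [l] on the range of the orthogonal
   projection [P], eigenvalue [m] on its complement. *)
Record proj_decomp A l m P : Prop := ProjDecomp {
  proj_decompE : A = l *: P + m *: (1%:M - P);
  proj_idem : P *m P = P;
  proj_sym : P^T = P;
  proj_neq0 : P != 0;
  proj_neq1 : P != 1%:M }.

Lemma proj_decomp_eigenvalue A l m P : proj_decomp A l m P ->
  eigenvalue A l /\ eigenvalue A m.
Proof.
case=> -> PP _ P0 P1; split; apply/eigenvalueP.
  have [v v0 vP] := proj_fixed_row PP P0; exists v => //.
  by rewrite mulmxDr -!scalemxAr mulmxBr mulmx1 vP subrr scaler0 addr0.
have [|v v0 vQ] := proj_fixed_row (proj_complK PP); first by rewrite subr_eq0 eq_sym.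
exists v => //; have vP : v *m P = 0.
  by apply/eqP; rewrite -[v in v *m P]vQ -mulmxA mulmxBl mul1mx PP subrr mulmx0.
by rewrite mulmxDr -!scalemxAr vQ vP scaler0 add0r.
Qed.

Lemma loewner_within_proj_decomp lo hi A l m P : proj_decomp A l m P ->
  loewner_within lo hi A <-> (lo <= l <= hi) /\ (lo <= m <= hi).
Proof.
move=> dA; split.
  have [El Em] := proj_decomp_eigenvalue dA.
  by move=> hA; split; apply: loewner_within_eigenvalue hA _.
case: dA => -> PP Pt _ _ [/andP[l1 l2] /andP[m1 m2]] w.
have p0 := qform_proj_ge0 w Pt PP.
have q0 := qform_proj_ge0 w (proj_compl_sym Pt) (proj_complK PP).
have pq : qform P w + qform (1%:M - P) w = sqnorm w.
  by rewrite -qformD addrC subrK qform1.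
rewrite qformD !qformZ -pq; apply/andP; split; nra.
Qed.

Lemma proj_decomp_pow A l m P n : proj_decomp A l m P ->
  A ^+ n = l ^+ n *: P + m ^+ n *: (1%:M - P).
Proof.
case=> -> PP _ _ _.
have PQ : P *m (1%:M - P) = 0 by rewrite mulmxBr mulmx1 PP subrr.
have QP : (1%:M - P) *m P = 0 by rewrite mulmxBl mul1mx PP subrr.
elim: n => [|n IH]; first by rewrite !expr0 !scale1r addrC subrK.
rewrite exprS IH -mulmxE mulmxDl !mulmxDr -!scalemxAl -!scalemxAr.
by rewrite PP PQ QP proj_complK // !scaler0 addr0 add0r !scalerA -!exprS.
Qed.

End QuadraticForm.

Section Dim2.
Variable R : realType.
Implicit Types (A B Y : 'M[R]_2) (w : 'cV[R]_2).

Lemma ord2P (i : 'I_2) : i = 0 \/ i = 1.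
Proof. by case: i => [[|[|//]] ?]; [left|right]; apply: val_inj. Qed.

Lemma matrix2_eq A B : A 0 0 = B 0 0 -> A 0 1 = B 0 1 -> A 1 0 = B 1 0 ->
  A 1 1 = B 1 1 -> A = B.
Proof.
move=> e00 e01 e10 e11; apply/matrixP => i j.
by case: (ord2P i) (ord2P j) => -> [] ->.
Qed.

Lemma mul2E m p (A : 'M[R]_(m, 2)) (B : 'M[R]_(2, p)) i j :
  (A *m B) i j = A i 0 * B 0 j + A i 1 * B 1 j.
Proof.
rewrite mxE big_ord_recl big_ord1.
by have -> : lift ord0 ord0 = 1 :> 'I_2 by apply: val_inj.
Qed.

Definition mk2 (x00 x01 x10 x11 : R) : 'M[R]_2 :=
  \matrix_(i, j) if i == 0 then (if j == 0 then x00 else x01)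
                 else (if j == 0 then x10 else x11).

Lemma mk2_neq x00 x01 x10 x11 A :
  x00 + x11 != A 0 0 + A 1 1 -> mk2 x00 x01 x10 x11 != A.
Proof. by apply: contraNneq => <-; rewrite !mxE. Qed.

Lemma proj_decomp2_angle p r C S : C ^+ 2 + S ^+ 2 = 1 ->
  proj_decomp (mk2 (p + r * C) (r * S) (r * S) (p - r * C)) (p + r) (p - r)
              (mk2 ((1 + C) / 2) (S / 2) (S / 2) ((1 - C) / 2)).
Proof.
move=> CS; split.
- by apply: matrix2_eq; rewrite !mxE /=; lra.
- by apply: matrix2_eq; rewrite !mul2E !mxE /=; nra.
- by apply: matrix2_eq; rewrite !mxE.
- by apply: mk2_neq; rewrite !mxE; lra.
- by apply: mk2_neq; rewrite !mxE /=; lra.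
Qed.

(* With [A = [[a, b], [b, d]]], write [(a - d) / 2 = r C] and [b = r S] in
   polar form; the eigenvalues are [(a + d) / 2 +- r]. *)
Lemma proj_decomp2_exists A : symmetric2 A -> exists l m P, proj_decomp A l m P.
Proof.
move=> sA; have A10 : A 1 0 = A 0 1 by rewrite -[in LHS]sA mxE.
set p := (A 0 0 + A 1 1) / 2; set e := (A 0 0 - A 1 1) / 2.
set r := Num.sqrt (e ^+ 2 + A 0 1 ^+ 2).
have r2 : r ^+ 2 = e ^+ 2 + A 0 1 ^+ 2 by rewrite sqr_sqrtr // addr_ge0 ?sqr_ge0.
suff [C [S [CS ->]]] : exists C S, C ^+ 2 + S ^+ 2 = 1 /\
    A = mk2 (p + r * C) (r * S) (r * S) (p - r * C).
  by exists (p + r), (p - r); eexists; exact: proj_decomp2_angle.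
have [r0|r0] := eqVneq r 0.
  have [e0 b0] : e = 0 /\ A 0 1 = 0 by move: r2; rewrite r0; nra.
  exists 1, 0; split; first by rewrite expr1n expr0n addr0.
  by apply: matrix2_eq; rewrite !mxE /= ?A10 ?b0 r0; move: e0; rewrite /p /e; lra.
exists (e / r), (A 0 1 / r); split.
  apply: (mulIf (expf_neq0 2 r0)).
  by rewrite mulrDl -!exprMn !divfK // mul1r r2.
by apply: matrix2_eq; rewrite !mxE /= ?A10 [r * _]mulrC divfK // /p /e; lra.
Qed.

Lemma loewner_within_isospectral lo hi A B : symmetric2 A ->
  (forall a, eigenvalue A a = eigenvalue B a) ->
  loewner_within lo hi B -> loewner_within lo hi A.
Proof.
move=> sA eAB hB; have [l [m [P dA]]] := proj_decomp2_exists sA.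
have [El Em] := proj_decomp_eigenvalue dA.
apply/(loewner_within_proj_decomp _ _ dA).
by split; apply: loewner_within_eigenvalue hB _; rewrite -eAB.
Qed.

Lemma mexp_proj_decomp A l m P : proj_decomp A l m P ->
  proj_decomp (mexp A) (expR l) (expR m) P.
Proof.
move=> dA; have [_ PP Pt P0 P1] := dA; split => //; rewrite /mexp.
have -> : series (fun k : nat => (k`!%:R)^-1 *: A ^+ k) =
    (fun N => series (exp_coeff l) N *: P + series (exp_coeff m) N *: (1%:M - P)).
  apply/funext => N; rewrite /series /= !scaler_suml -big_split /=.
  apply: eq_bigr => k _; rewrite (proj_decomp_pow k dA) scalerDr !scalerA.
  by rewrite /exp_coeff /= ![_^-1 * _]mulrC.
apply: (@cvg_lim _ (@norm_hausdorff R 'M[R]_2)).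
by apply: cvgD; apply: cvgZ;
  [exact: is_cvg_series_exp_coeff|exact: cvg_cst|exact: is_cvg_series_exp_coeff|exact: cvg_cst].
Qed.

Lemma mexp_within lo hi Y : symmetric2 Y ->
  loewner_within lo hi Y -> loewner_within (expR lo) (expR hi) (mexp Y).
Proof.
move=> sY; have [l [m [P dY]]] := proj_decomp2_exists sY.
rewrite (loewner_within_proj_decomp _ _ dY).
rewrite (loewner_within_proj_decomp _ _ (mexp_proj_decomp dY)).
by rewrite !ler_expR.
Qed.

Lemma mlog_spec Y : mlog Y = 0 \/ (symmetric2 (mlog Y) /\ mexp (mlog Y) = Y).
Proof. by rewrite /mlog; case: xgetP => [? _ [? ?]|_]; [right|left]. Qed.

Lemma mlog0 : mlog 0 = 0 :> 'M[R]_2.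
Proof.
have [//|[sL eL]] := mlog_spec 0.
have [l [m [P dL]]] := proj_decomp2_exists sL.
have [+ _] := proj_decomp_eigenvalue (mexp_proj_decomp dL).
rewrite eL => /eigenvalueP[v]; rewrite mulmx0 => /esym/eqP.
by rewrite scaler_eq0 gt_eqF ?expR_gt0 // => /= /eqP-> /eqP.
Qed.

Lemma mlog_within lo hi a b Y : lo <= 0 -> 0 <= hi ->
  expR lo <= a -> b <= expR hi ->
  loewner_within a b Y -> loewner_within lo hi (mlog Y).
Proof.
move=> lo0 hi0 ha hb hY; have [->|[sL eL]] := mlog_spec Y.
  exact: loewner_within0.
have [l [m [P dL]]] := proj_decomp2_exists sL.
have : loewner_within a b (mexp (mlog Y)) by rewrite eL.
rewrite (loewner_within_proj_decomp _ _ (mexp_proj_decomp dL)).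
rewrite (loewner_within_proj_decomp _ _ dL) => -[/andP[l1 l2] /andP[m1 m2]].
by split; apply/andP; split; rewrite -ler_expR;
  [exact: le_trans ha l1|exact: le_trans l2 hb|exact: le_trans ha m1|exact: le_trans m2 hb].
Qed.

Lemma qform2E Y w : qform Y w =
  w 0 0 * (Y 0 0 * w 0 0 + Y 0 1 * w 1 0) + w 1 0 * (Y 1 0 * w 0 0 + Y 1 1 * w 1 0).
Proof. by rewrite /qform !mul2E !mxE; ring. Qed.

Local Open Scope classical_set_scope.

Lemma qform_cvg {T} (F : set_system T) {FF : Filter F} (f : T -> 'M[R]_2) L w :
  f @ F --> L -> (fun t => qform (f t) w) @ F --> qform L w.
Proof.
move=> fL; have ent i j : (fun t => f t i j) @ F --> L i j.
  exact: continuous_cvg (@coord_continuous _ _ _ i j L) fL.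
under eq_fun do rewrite qform2E; rewrite qform2E.
by apply: cvgD; apply: cvgM; do ?[exact: cvg_cst]; apply: cvgD; apply: cvgM;
  do ?[exact: cvg_cst]; exact: ent.
Qed.

(* A divergent limit is the junk value [point = 0], which lies in any
   [[lo, hi]] containing [0]. *)
Lemma lim_loewner_within {T} (F : set_system T) {FF : ProperFilter F}
    (f : T -> 'M[R]_2) lo hi : lo <= 0 -> 0 <= hi ->
  (\forall t \near F, loewner_within lo hi (f t)) ->
  loewner_within lo hi (lim (f @ F)).
Proof.
move=> lo0 hi0 hf.
have [[L fL]|ncf] := pselect (exists L : 'M[R]_2, f @ F --> L); last first.
  rewrite dvgP => [|cf]; last by apply: ncf; exists (lim (f @ F)).
  rewrite (_ : point = 0); first exact: loewner_within0.
  by apply/matrixP => i j; rewrite !mxE.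
rewrite (cvg_lim _ fL) // => w.
have qc : (fun t => qform (f t) w) @ F --> qform L w by exact: qform_cvg.
apply/andP; split.
  apply: (closed_cvg _ (@closed_ge R (lo * sqnorm w)) _ _ qc).
  by apply: filterS hf => t /(_ w) /andP[].
apply: (closed_cvg _ (@closed_le R (hi * sqnorm w)) _ _ qc).
by apply: filterS hf => t /(_ w) /andP[].
Qed.

Lemma lim_loewner_within_addgt0 {T} (F : set_system T) {FF : ProperFilter F}
    (f : T -> 'M[R]_2) lo hi : lo <= 0 -> 0 <= hi ->
  (forall e, 0 < e -> \forall t \near F, loewner_within lo (hi + e) (f t)) ->
  loewner_within lo hi (lim (f @ F)).
Proof.
move=> lo0 hi0 hf; apply: loewner_within_addgt0 => e e0.
apply: lim_loewner_within => //; last exact: hf.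
exact: addr_ge0 hi0 (ltW e0).
Qed.

Local Close Scope classical_set_scope.

(* [sum_i exp (t X_i)] lies between [exp (-t c)] and [n exp (t c)], and
   [n <= t e] makes [log n <= t e]. *)
Lemma mlog_sum_mexp_within n (X : 'I_n -> 'M[R]_2) c t e :
  0 <= c -> 0 < t -> 0 <= e -> n%:R <= t * e ->
  (forall i, symmetric2 (X i)) -> (forall i, loewner_within (- c) c (X i)) ->
  loewner_within (- (t * c)) (t * (c + e)) (mlog (\sum_i mexp (t *: X i))).
Proof.
move=> c0 t0 e0 nte sX hX; have t0' := ltW t0.
have lo0 : - (t * c) <= 0 by rewrite oppr_le0 mulr_ge0.
have hi0 : 0 <= t * (c + e) by rewrite mulr_ge0 ?addr_ge0.
case: n X sX hX nte => [|k] X sX hX nte.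
  by rewrite big_ord0 mlog0; apply: loewner_within0.
have hterm i : loewner_within (expR (- (t * c))) (expR (t * c)) (mexp (t *: X i)).
  apply: mexp_within; first by rewrite /symmetric2 linearZ /= sX.
  by rewrite -mulrN; apply: loewner_withinZ t0' (hX i).
have := loewner_within_sum hterm; rewrite !sumr_const card_ord.
apply: mlog_within => //; rewrite -mulr_natl; first by rewrite ler_peMl ?expR_ge0 // ler1n.
rewrite mulrDr expRD mulrC ler_pM2l ?expR_gt0 //.
by apply: (le_trans nte); apply: le_trans (expR_ge1Dx _); rewrite lerDr.
Qed.

Lemma SupLE_within n (X : 'I_n -> 'M[R]_2) c : 0 <= c ->
  (forall i, symmetric2 (X i)) -> (forall i, loewner_within (- c) c (X i)) ->
  loewner_within (- c) c (SupLE X).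
Proof.
move=> c0 sX hX; apply: lim_loewner_within_addgt0 => //; first by rewrite oppr_le0.
move=> e e0; apply: filterS (filterI (nbhs_infty_gt 0) (nbhs_infty_ger (n%:R / e))).
move=> m [m0 hm]; have mR0 : 0 < m%:R :> R by rewrite ltr0n.
have nme : n%:R <= m%:R * e by rewrite -ler_pdivrMr.
have im0 : 0 <= (m%:R)^-1 :> R by rewrite invr_ge0 ltW.
move: (mlog_sum_mexp_within c0 mR0 (ltW e0) nme sX hX) => /(loewner_withinZ im0).
by rewrite mulrN !(mulKf (lt0r_neq0 mR0)).
Qed.

Lemma loewner_le_scalar_within c Y :
  loewner_le (- (c *: 1%:M)) Y /\ loewner_le Y (c *: 1%:M) <->
  loewner_within (- c) c Y.
Proof.
have leE A B : loewner_le A B <-> forall w, qform A w <= qform B w.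
  by split=> h w; move: (h w); rewrite -/(qform _ _) qformD qformN subr_ge0.
have cE w : qform (c *: 1%:M) w = c * sqnorm w by rewrite qformZ qform1.
rewrite !leE; split=> [[h1 h2] w|h].
  by move: (h1 w) (h2 w); rewrite qformN !cE mulNr => -> ->.
by split=> w; case/andP: (h w); rewrite ?qformN cE mulNr.
Qed.

(* Off the admissible families, [xget] returns its default, the constant
   family [X]. *)
Lemma SupLE_admissible_within n (X : 'I_n -> 'M[R]_2) c d : 0 <= c -> 0 < d ->
  (forall i, symmetric2 (X i)) -> (forall i, loewner_within (- c) c (X i)) ->
  loewner_within (- c) c (SupLE (xget (fun _ => X) (admissible_families X) d)).
Proof.
move=> c0 d0 sX hX.
have [[Z adm]|nadm] := pselect (exists Z, admissible_families X Z); last first.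
  by rewrite xgetPN; [exact: SupLE_within|move=> Z hZ; apply: nadm; exists Z].
have [[_ eig] hs] := xgetPex (fun _ => X) (ex_intro _ Z adm).
have [sF _] := hs d d0.
apply: SupLE_within => // i.
exact: loewner_within_isospectral (sF i) (eig d d0 i) (hX i).
Qed.

End Dim2.

Unset Implicit Arguments.

Theorem corollary3 (R : realType) (n : nat) (X : 'I_n -> 'M[R]_2) :
  (forall i, symmetric2 (X i)) ->
  (forall i, loewner_le (- ((Num.sqrt (2 : R))^-1 *: 1%:M)) (X i) /\
             loewner_le (X i) ((Num.sqrt (2 : R))^-1 *: 1%:M)) ->
  loewner_le (- ((Num.sqrt (2 : R))^-1 *: 1%:M)) (SupRLE X) /\
  loewner_le (SupRLE X) ((Num.sqrt (2 : R))^-1 *: 1%:M).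
Proof.
set c := (Num.sqrt 2)^-1 => sX hX.
have c0 : 0 <= c by rewrite invr_ge0 sqrtr_ge0.
have hXc i : loewner_within (- c) c (X i) by apply/loewner_le_scalar_within.
apply/loewner_le_scalar_within; rewrite /SupRLE; case: asboolP => _.
  exact: SupLE_within.
apply: lim_loewner_within; [by rewrite oppr_le0|done|].
by apply: filterS (nbhs_right_gt 0) => d d0; exact: SupLE_admissible_within.
Qed.
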